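(* Let $X$ be a locally connected topological space. Then the functor $U\mapsto\pi_0(U)$ (the set of connected components of $U$) is a terminal object of the category of cosheaves of sets on $X$.
   Context: $\mathfrak{Off}(X)$ is the poset of open subsets of $X$ viewed as a category; for $V\subseteq U$ open, $\pi_0(V)\to\pi_0(U)$ sends a component of $V$ to the component of $U$ containing it. A functor $G:\mathfrak{Off}(X)\to\mathbf{Sets}$ is a cosheaf if for every open $U$ and every open covering $U=\bigcup_iU_i$, the map $\coprod_iG(U_i)\to G(U)$ exhibits $G(U)$ as the coequaliser of the two maps $\coprod_{i,j}G(U_i\cap U_j)\rightrightarrows\coprod_iG(U_i)$ induced by the inclusions. The category of cosheaves of sets on $X$ has as morphisms the natural transformations. *)

From HB Require Import structures.
From mathcomp Require Import all_boot all_order.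
From mathcomp Require Import all_classical all_reals topology.
Set Implicit Arguments. Unset Strict Implicit. Unset Printing Implicit Defensive.
Local Open Scope classical_set_scope.

Definition locally_connected (X : topologicalType) : Prop :=
  forall (U : set X) (x : X), open U -> U x ->
    exists V : set X, [/\ open V, connected V, V x & V `<=` U].

Record OpenSet (X : topologicalType) := MkOpen { oset :> set X; oset_open : open oset }.

Definition OpenI (X : topologicalType) (U V : OpenSet X) : OpenSet X :=
  MkOpen (openI (oset_open U) (oset_open V)).

Lemma OpenI_subl (X : topologicalType) (U V : OpenSet X) : OpenI U V `<=` U.
Proof. by move=> x []. Qed.
Lemma OpenI_subr (X : topologicalType) (U V : OpenSet X) : OpenI U V `<=` V.
Proof. by move=> x []. Qed.

Definition is_functor (X : topologicalType) (G : OpenSet X -> Type)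
  (Gm : forall V U : OpenSet X, V `<=` U -> G V -> G U) : Prop :=
  (forall (U : OpenSet X) (h : U `<=` U) (a : G U), Gm U U h a = a) /\
  (forall (W V U : OpenSet X) (h1 : W `<=` V) (h2 : V `<=` U) (h3 : W `<=` U) (a : G W),
      Gm W U h3 a = Gm V U h2 (Gm W V h1 a)).

Definition is_coequalizer (A B C : Type) (f g : B -> A) (q : A -> C) : Prop :=
  (forall b, q (f b) = q (g b)) /\
  forall (T : Type) (k : A -> T), (forall b, k (f b) = k (g b)) ->
    exists! h : C -> T, forall a, h (q a) = k a.

Definition is_cosheaf (X : topologicalType) (G : OpenSet X -> Type)
  (Gm : forall V U : OpenSet X, V `<=` U -> G V -> G U) : Prop :=
  forall (U : OpenSet X) (I : Type) (Ui : I -> OpenSet X)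
         (cov : \bigcup_i (Ui i : set X) = U) (sub : forall i, Ui i `<=` U),
  is_coequalizer
    (fun p : {ij : I * I & G (OpenI (Ui ij.1) (Ui ij.2))} =>
       existT (fun i => G (Ui i)) (projT1 p).1
         (Gm _ _ (@OpenI_subl X (Ui (projT1 p).1) (Ui (projT1 p).2)) (projT2 p)))
    (fun p : {ij : I * I & G (OpenI (Ui ij.1) (Ui ij.2))} =>
       existT (fun i => G (Ui i)) (projT1 p).2
         (Gm _ _ (@OpenI_subr X (Ui (projT1 p).1) (Ui (projT1 p).2)) (projT2 p)))
    (fun a : {i : I & G (Ui i)} => Gm _ _ (sub (projT1 a)) (projT2 a)).

Definition is_natural (X : topologicalType) (G H : OpenSet X -> Type)
  (Gm : forall V U : OpenSet X, V `<=` U -> G V -> G U)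
  (Hm : forall V U : OpenSet X, V `<=` U -> H V -> H U)
  (eta : forall U, G U -> H U) : Prop :=
  forall (V U : OpenSet X) (h : V `<=` U) (a : G V), eta U (Gm V U h a) = Hm V U h (eta V a).

Definition pi0 (X : topologicalType) (U : OpenSet X) : Type :=
  {C : set X | exists x, oset U x /\ C = connected_component (oset U) x}.

(* For V <= U: a component C of V goes to the component of U containing
   (a chosen point of, hence all of) C. *)
Definition pi0_map (X : topologicalType) (V U : OpenSet X) (h : V `<=` U)
  (C : pi0 V) : pi0 U :=
  let x := proj1_sig (cid (proj2_sig C)) in
  let Hx := proj2_sig (cid (proj2_sig C)) in
  exist _ (connected_component (oset U) x) (ex_intro _ x (conj (h x (proj1 Hx)) erefl)).

From mathcomp Require Import all_boot all_order.
From mathcomp Require Import all_classical all_reals topology.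
Set Implicit Arguments. Unset Strict Implicit. Unset Printing Implicit Defensive.
Local Open Scope classical_set_scope.

(* In a locally connected space the components of an open set U are open, so
   they form a cover of U by pairwise disjoint open sets. For a cosheaf G, the
   coequaliser of this cover, together with G(∅) = ∅, exhibits G(U) as the
   disjoint union of the G(C) over the components C of U; sending G(C) to C is
   the unique natural map G → π₀, because naturality forces every element of
   G(C) to go to the only component of C. Conversely π₀ is a cosheaf: a map out
   of the components of a cover that agrees on overlaps is locally constant on
   U, hence constant on each component of U. *)

Lemma functor_square (X : topologicalType) (G : OpenSet X -> Type)
    (Gm : forall V U : OpenSet X, V `<=` U -> G V -> G U) :
  is_functor Gm ->
  forall (W V V' U : OpenSet X) (WV : W `<=` V) (VU : V `<=` U)
    (WV' : W `<=` V') (V'U : V' `<=` U) (a : G W),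
  Gm _ _ VU (Gm _ _ WV a) = Gm _ _ V'U (Gm _ _ WV' a).
Proof.
move=> [_ Gcomp] W V V' U WV VU WV' V'U a.
have WU : W `<=` U by move=> z /WV /VU.
by rewrite -(Gcomp _ _ _ WV VU WU) -(Gcomp _ _ _ WV' V'U WU).
Qed.

Lemma exists_unique_factor (A C T : Type) (q : A -> C) (k : A -> T) :
  (forall c, exists a, q a = c) -> (forall a b, q a = q b -> k a = k b) ->
  exists! h : C -> T, forall a, h (q a) = k a.
Proof.
move=> q_surj k_q; exists (fun c => k (projT1 (cid (q_surj c)))); split.
  by move=> a /=; case: cid => b; exact: k_q.
by move=> h hE; apply: funext => c; case: cid => b /= bc; rewrite -bc hE.
Qed.

(* Coequalise into [Prop] the constant [True] with itself: the unique factor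
   is [True], but so is the image predicate of [q]. *)
Lemma coequalizer_surj (A B C : Type) (f g : B -> A) (q : A -> C) :
  is_coequalizer f g q -> forall c, exists a, q a = c.
Proof.
move=> [_ q_univ] c.
have [h [_ h_uniq]] := q_univ Prop (fun=> True) (fun=> erefl).
have hT := h_uniq (fun=> True) (fun=> erefl).
have himg := h_uniq (fun c => exists a, q a = c)
  (fun a => propext (conj (fun=> I) (fun=> ex_intro _ a erefl))).
by have /= -> := congr1 (fun F : C -> Prop => F c) (etrans (esym himg) hT).
Qed.

(* The empty family covers the empty set, and its coequaliser diagram has
   empty source. *)
Lemma cosheaf_empty (X : topologicalType) (G : OpenSet X -> Type)
    (Gm : forall V U : OpenSet X, V `<=` U -> G V -> G U) :
  is_cosheaf Gm -> forall W : OpenSet X, oset W = set0 -> G W -> False.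
Proof.
move=> Gcosh W W0 a.
pose Ui (i : Empty_set) : OpenSet X := match i with end.
have cov : \bigcup_i oset (Ui i) = W by rewrite W0; apply/seteqP; split => z // [[]].
have [_ q_univ] := Gcosh W Empty_set Ui cov (fun i => match i with end).
have [h _] := q_univ False (fun a => match projT1 a with end)
  (fun b => match (projT1 b).1 with end).
exact: h a.
Qed.

Section ConnectedComponents.
Variable X : topologicalType.
Implicit Types (A U V : set X) (x y z : X).

Lemma open_of_local_open A :
  (forall z, A z -> exists2 V, open V & V z /\ V `<=` A) -> open A.
Proof.
move=> Aloc; have -> : A = \bigcup_(V in [set V | open V /\ V `<=` A]) V.
  apply/seteqP; split => [z Az|z [V [_ VA] Vz]]; last exact: VA.
  by have [V oV [Vz VA]] := Aloc z Az; exists V.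
by apply: bigcup_open => V [].
Qed.

Lemma connected_component_meml A x y : connected_component A x y -> A x.
Proof.
move=> Axy; apply: contrapT => Ax.
by move: Axy; rewrite connected_component_out.
Qed.

Lemma connected_componentS V U x : V `<=` U ->
  connected_component V x `<=` connected_component U x.
Proof.
move=> VU y Vxy; have Vx := connected_component_meml Vxy.
apply: (connected_component_max (B := connected_component V x)) => //.
- exact: connected_component_refl.
- by move=> z /connected_component_sub /VU.
- exact: component_connected.
Qed.

Lemma open_connected_component U x : locally_connected X -> open U ->
  open (connected_component U x).
Proof.
move=> lcX oU; apply: open_of_local_open => z Uxz.
have [V [oV cV Vz VU]] := lcX U z oU (connected_component_sub Uxz).
exists V => //; split => //.
by rewrite (same_connected_component Uxz); exact: connected_component_max.
Qed.

(* The points of [K] satisfying [P], and those not satisfying it, are both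
   relatively open in [K]; connectedness rules out a proper such subset. *)
Lemma connected_locally_constant_pred (K : set X) (P : X -> Prop) :
  connected K ->
  (forall z, K z -> exists2 V, open V & V z /\ forall w, V w -> (P w <-> P z)) ->
  forall x y, K x -> K y -> P x -> P y.
Proof.
move=> cK Ploc x y Kx Ky Px.
pose OP := \bigcup_(V in [set V | open V /\ V `<=` P]) V.
pose ONP := \bigcup_(V in [set V | open V /\ V `<=` ~` P]) V.
have KP_eq : K `&` P = K.
  apply: cK; first by exists x.
  - exists OP; first by apply: bigcup_open => V [].
    apply/seteqP; split => [z [Kz Pz]|z [Kz [V [_ VP] Vz]]].
      have [V oV [Vz VP]] := Ploc z Kz.
      by split => //; exists V => //; split => // w /VP ->.
    by split; [|exact: VP].
  - exists (~` ONP); first by apply: open_closedC; apply: bigcup_open => V [].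
    apply/seteqP; split => [z [Kz Pz]|z [Kz nONPz]].
      by split => // -[V [_ VnP] Vz]; exact: VnP Vz Pz.
    split => //; apply: contrapT => nPz.
    have [V oV [Vz VP]] := Ploc z Kz.
    by apply: nONPz; exists V => //; split => // w Vw /(VP w Vw).
by move: Ky; rewrite -KP_eq => -[].
Qed.

End ConnectedComponents.

Section Pi0.
Variable X : topologicalType.
Implicit Types (U V : OpenSet X).

Definition pi0_of U z (Uz : oset U z) : pi0 U :=
  exist _ (connected_component U z) (ex_intro _ z (conj Uz erefl)).

Lemma pi0_val_inj U (C D : pi0 U) : proj1_sig C = proj1_sig D -> C = D.
Proof.
case: C D => [c pc] [d pd] /= cd; subst d.
by congr exist; exact: Prop_irrelevance.
Qed.

Lemma pi0_ofP U (C : pi0 U) : exists z (Uz : oset U z), C = pi0_of Uz.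
Proof.
case: C => c [z [Uz cE]]; exists z, Uz.
by apply: pi0_val_inj; rewrite /= cE.
Qed.

Lemma pi0_of_eq U z w (Uz : oset U z) (Uw : oset U w) :
  connected_component U z w -> pi0_of Uz = pi0_of Uw.
Proof. by move=> Uzw; apply: pi0_val_inj; exact: same_connected_component. Qed.

Lemma pi0_of_irr U z (Uz Uz' : oset U z) : pi0_of Uz = pi0_of Uz'.
Proof. by congr pi0_of; exact: Prop_irrelevance. Qed.

Lemma pi0_subset U (C : pi0 U) : proj1_sig C `<=` U.
Proof. by have [z [Uz ->]] := pi0_ofP C; exact: connected_component_sub. Qed.

Lemma pi0_of_mem U (C : pi0 U) y (Cy : proj1_sig C y) : C = pi0_of (pi0_subset Cy).
Proof.
move: Cy; have [z [Uz ->]] := pi0_ofP C => Czy.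
exact: (pi0_of_eq Uz _ Czy).
Qed.

Lemma pi0_mapE V U (VU : V `<=` U) (C : pi0 V) y :
  proj1_sig C y -> proj1_sig (pi0_map VU C) = connected_component U y.
Proof.
rewrite /pi0_map /=; case: cid => x [Vx Cx] /=; rewrite Cx => Vxy.
exact/same_connected_component/(connected_componentS VU).
Qed.

Lemma pi0_map_of V U (VU : V `<=` U) z (Vz : oset V z) :
  pi0_map VU (pi0_of Vz) = pi0_of (VU z Vz).
Proof.
apply: pi0_val_inj; rewrite (pi0_mapE VU (y := z)) //=.
exact: connected_component_refl.
Qed.

Lemma pi0_map_subset V U (VU : V `<=` U) (C : pi0 V) :
  proj1_sig C `<=` proj1_sig (pi0_map VU C).
Proof.
have [z [Vz ->]] := pi0_ofP C; rewrite pi0_map_of /=.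
exact: connected_componentS.
Qed.

Lemma pi0_functor : is_functor (@pi0_map X).
Proof.
split => [U UU C|W V U WV VU WU C]; have [z [Wz ->]] := pi0_ofP C.
  by rewrite pi0_map_of; apply/pi0_of_eq/connected_component_refl.
by rewrite !pi0_map_of; apply/pi0_of_eq/connected_component_refl/WU.
Qed.

End Pi0.

Section Pi0Cosheaf.
Variables (X : topologicalType) (U : OpenSet X) (I : Type) (Ui : I -> OpenSet X).
Hypotheses (lcX : locally_connected X) (cov : \bigcup_i oset (Ui i) = U)
  (sub : forall i, Ui i `<=` U).

Let q (a : {i : I & pi0 (Ui i)}) : pi0 U := pi0_map (@sub (projT1 a)) (projT2 a).

Lemma pi0_cover_surj (C : pi0 U) : exists a, q a = C.
Proof.
have [x [Ux ->]] := pi0_ofP C.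
have [i _ Uix] : (\bigcup_i oset (Ui i)) x by rewrite cov.
by exists (existT _ i (pi0_of Uix)); rewrite /q pi0_map_of; apply: pi0_of_eq;
  exact: connected_component_refl.
Qed.

Variables (T : Type) (k : {i : I & pi0 (Ui i)} -> T).
Hypothesis k_coeq : forall i j (C : pi0 (OpenI (Ui i) (Ui j))),
  k (existT _ i (pi0_map (@OpenI_subl X _ _) C)) =
  k (existT _ j (pi0_map (@OpenI_subr X _ _) C)).

Lemma k_pi0_of i j z (Uiz : oset (Ui i) z) (Ujz : oset (Ui j) z) :
  k (existT _ i (pi0_of Uiz)) = k (existT _ j (pi0_of Ujz)).
Proof.
have Uijz : oset (OpenI (Ui i) (Ui j)) z by split.
have := k_coeq (pi0_of Uijz).
by rewrite !pi0_map_of (pi0_of_irr (OpenI_subl Uijz) Uiz)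
  (pi0_of_irr (OpenI_subr Uijz) Ujz).
Qed.

(* [k] is constant on each component of each [Ui j], hence locally constant
   on [U]; it is then constant on every component of [U]. *)
Lemma k_factor a b : q a = q b -> k a = k b.
Proof.
case: a b => i C [l D]; rewrite /q /=.
have [x [Uix ->]] := pi0_ofP C; have [y [Uly ->]] := pi0_ofP D.
rewrite !pi0_map_of => /(congr1 (@proj1_sig _ _)) /= Uxy.
pose P z := exists j (Ujz : oset (Ui j) z),
  k (existT _ j (pi0_of Ujz)) = k (existT _ i (pi0_of Uix)).
have PE j z (Ujz : oset (Ui j) z) :
    P z <-> k (existT _ j (pi0_of Ujz)) = k (existT _ i (pi0_of Uix)).
  by split => [[j' [Uj'z <-]]|kz]; [exact: k_pi0_of|exists j, Ujz].
suff /(PE l y Uly) kly : P y by rewrite kly.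
apply: (@connected_locally_constant_pred _ _ P (@component_connected _ U x) _ x y).
- move=> z /connected_component_sub Uz.
  have [j _ Ujz] : (\bigcup_i oset (Ui i)) z by rewrite cov.
  exists (connected_component (Ui j) z).
    exact: open_connected_component lcX (oset_open _).
  split; first exact: connected_component_refl.
  move=> w Ujzw; have Ujw := connected_component_sub Ujzw.
  by rewrite (PE j w Ujw) (PE j z Ujz) (pi0_of_eq Ujz Ujw Ujzw).
- exact/connected_component_refl/sub/Uix.
- by rewrite Uxy; exact/connected_component_refl/sub/Uly.
- by exists i, Uix.
Qed.

End Pi0Cosheaf.

Lemma pi0_cosheaf (X : topologicalType) :
  locally_connected X -> is_cosheaf (@pi0_map X).
Proof.
move=> lcX U I Ui cov sub; split.
  by move=> [[i j] C] /=; exact: (functor_square (@pi0_functor X)).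
move=> T k k_coeq; apply: exists_unique_factor; first exact: (pi0_cover_surj cov).
apply: (k_factor lcX cov) => i j C.
exact: (k_coeq (existT _ (i, j) C)).
Qed.

Section ComponentCover.
Variable X : topologicalType.
Hypothesis lcX : locally_connected X.
Implicit Types U : OpenSet X.

Lemma pi0_open U (C : pi0 U) : open (proj1_sig C).
Proof.
have [z [Uz ->]] := pi0_ofP C.
exact: open_connected_component lcX (oset_open U).
Qed.

Definition pi0_open_set U (C : pi0 U) : OpenSet X := MkOpen (pi0_open C).

Lemma pi0_open_set_sub U (C : pi0 U) : pi0_open_set C `<=` U.
Proof. exact: pi0_subset. Qed.

Lemma pi0_open_set_cover U : \bigcup_C oset (@pi0_open_set U C) = U.
Proof.
apply/seteqP; split => [z [C _ Cz]|z Uz]; first exact: pi0_subset Cz.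
by exists (pi0_of Uz) => //; exact: connected_component_refl.
Qed.

Lemma pi0_open_setI_eq0 U (C D : pi0 U) :
  C <> D -> oset (OpenI (pi0_open_set C) (pi0_open_set D)) = set0.
Proof.
move=> CD; apply/seteqP; split => // z [Cz Dz]; apply: CD.
by rewrite (pi0_of_mem Cz) (pi0_of_mem Dz); exact: pi0_of_irr.
Qed.

Lemma pi0_map_pi0_open_set U (C : pi0 U) (CU : pi0_open_set C `<=` U)
    (E : pi0 (pi0_open_set C)) :
  pi0_map CU E = C.
Proof.
have [y [Cy ->]] := pi0_ofP E.
by rewrite pi0_map_of [in RHS](pi0_of_mem Cy); exact: pi0_of_irr.
Qed.

End ComponentCover.

Arguments pi0_open_set_sub {X lcX U} C [t].

Section Terminal.
Variables (X : topologicalType) (G : OpenSet X -> Type)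
  (Gm : forall V U : OpenSet X, V `<=` U -> G V -> G U).
Hypotheses (lcX : locally_connected X) (Gcosh : is_cosheaf Gm).

Lemma pi0_open_set_coeq U
    (b : {CD : pi0 U * pi0 U &
          G (OpenI (pi0_open_set lcX CD.1) (pi0_open_set lcX CD.2))}) :
  (projT1 b).1 = (projT1 b).2.
Proof.
case: b => [[C D] b] /=; apply: contrapT => CD.
exact: (cosheaf_empty Gcosh (pi0_open_setI_eq0 lcX CD) b).
Qed.

Lemma cosheaf_to_pi0_ex (U : OpenSet X) : {eta : G U -> pi0 U |
  forall C (b : G (pi0_open_set lcX C)), eta (Gm (pi0_open_set_sub C) b) = C}.
Proof.
have [_ q_univ] := Gcosh (pi0_open_set_cover lcX U) (@pi0_open_set_sub _ lcX U).
have /cid[eta [etaE _]] := q_univ (pi0 U) (@projT1 _ _) (@pi0_open_set_coeq U).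
by exists eta => C b; exact: (etaE (existT _ C b)).
Qed.

Definition cosheaf_to_pi0 (U : OpenSet X) : G U -> pi0 U := sval (cosheaf_to_pi0_ex U).

Lemma cosheaf_to_pi0E U (C : pi0 U) (b : G (pi0_open_set lcX C)) :
  cosheaf_to_pi0 (Gm (pi0_open_set_sub C) b) = C.
Proof. exact: (svalP (cosheaf_to_pi0_ex U)). Qed.

Lemma cosheaf_pi0_surj (U : OpenSet X) (a : G U) :
  exists C (b : G (pi0_open_set lcX C)), Gm (pi0_open_set_sub C) b = a.
Proof.
have [[C b] <-] := coequalizer_surj
  (Gcosh (pi0_open_set_cover lcX U) (@pi0_open_set_sub _ lcX U)) a.
by exists C, b.
Qed.

Lemma natural_to_pi0E (eta : forall U, G U -> pi0 U) :
  is_natural Gm (@pi0_map X) eta ->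
  forall U C (b : G (pi0_open_set lcX C)), eta U (Gm (pi0_open_set_sub C) b) = C.
Proof. by move=> etaN U C b; rewrite etaN pi0_map_pi0_open_set. Qed.

Lemma natural_to_pi0_unique (eta eta' : forall U, G U -> pi0 U) :
  is_natural Gm (@pi0_map X) eta -> is_natural Gm (@pi0_map X) eta' ->
  forall U a, eta U a = eta' U a.
Proof.
move=> etaN eta'N U a; have [C [b <-]] := cosheaf_pi0_surj a.
by rewrite (natural_to_pi0E etaN) (natural_to_pi0E eta'N).
Qed.

Lemma cosheaf_to_pi0_natural :
  is_functor Gm -> is_natural Gm (@pi0_map X) cosheaf_to_pi0.
Proof.
move=> Gfun V U VU a; have [C [b <-]] := cosheaf_pi0_surj a.
rewrite cosheaf_to_pi0E.
have CC' : pi0_open_set lcX C `<=` pi0_open_set lcX (pi0_map VU C).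
  exact: pi0_map_subset.
by rewrite (functor_square Gfun _ VU CC' (pi0_open_set_sub _)) cosheaf_to_pi0E.
Qed.

End Terminal.

Theorem corollary2p5 (X : topologicalType) (hX : locally_connected X) :
  is_functor (@pi0_map X) /\ is_cosheaf (@pi0_map X) /\
  forall (G : OpenSet X -> Type) (Gm : forall V U : OpenSet X, V `<=` U -> G V -> G U),
    is_functor Gm -> is_cosheaf Gm ->
    exists eta : forall U, G U -> pi0 U,
      is_natural Gm (@pi0_map X) eta /\
      forall eta' : forall U, G U -> pi0 U,
        is_natural Gm (@pi0_map X) eta' -> forall U a, eta' U a = eta U a.
Proof.
split; first exact: pi0_functor.
split; first exact: pi0_cosheaf.
move=> G Gm Gfun Gcosh.
have etaN := cosheaf_to_pi0_natural hX Gcosh Gfun.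
exists (cosheaf_to_pi0 hX Gcosh); split => // eta' eta'N U a.
exact: natural_to_pi0_unique eta'N etaN U a.
Qed.
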